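(* If a completely simple semigroup $S=(G,P,\Lambda,I)$ is an equational domain in the language $\mathcal{L}_S$, then its structural group $G$ is an equational domain in the group language $\mathcal{L}_G$.
   Context: Rees representation: a completely simple semigroup $S=(G,P,\Lambda,I)$ is given by a group $G$ (the structural group), index sets $\Lambda,I$ (each containing an element $1$), and a matrix $P=(p_{i\lambda})_{i\in I,\lambda\in\Lambda}$ over $G$ normalised so that $p_{1\lambda}=p_{i1}=1_G$; elements are triples $(\lambda,g,i)$ with product $(\lambda,g,i)(\mu,h,j)=(\lambda,gp_{i\mu}h,j)$ and inversion $(\lambda,g,i)^{-1}=(\lambda,p_{i\lambda}^{-1}g^{-1}p_{i\lambda}^{-1},i)$. The language $\mathcal{L}_S$ is $\{\cdot,{}^{-1}\}$ plus a constant for each element of $S$; the group language $\mathcal{L}_G$ is $\{\cdot,{}^{-1},1\}$ plus a constant for each element of $G$ (so equations over $G$ are equalities $w(X)=1$ with $w\in F(X)*G$). For either structure: an equation is an equality of two terms, a system is a set of equations, an algebraic set is the solution set of a system, and the structure is an equational domain (e.d.) if every finite union of algebraic sets is algebraic. *)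

From mathcomp Require Import all_boot.
Set Implicit Arguments. Unset Strict Implicit. Unset Printing Implicit Defensive.

Record Group := {
  gcar :> Type;
  gmul : gcar -> gcar -> gcar;
  ginv : gcar -> gcar;
  gone : gcar;
  gmulA : forall x y z, gmul x (gmul y z) = gmul (gmul x y) z;
  gmul1g : forall x, gmul gone x = x;
  gmulVg : forall x, gmul (ginv x) x = gone
}.

(** Rees data (G, P, Lambda, I) with distinguished indices 1 in Lambda and I
    and a normalised sandwich matrix P = (p_{i lambda}). *)
Record ReesData := {
  rG : Group;
  rLam : Type;
  rI : Type;
  rLam1 : rLam;
  rI1 : rI;
  rP : rI -> rLam -> rG;
  rP1l : forall l, rP rI1 l = gone rG;
  rPi1 : forall i, rP i rLam1 = gone rG
}.

Definition rees_car (R : ReesData) : Type := (rLam R * rG R * rI R)%type.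

Definition rees_mul (R : ReesData) (a b : rees_car R) : rees_car R :=
  let: (l, g, i) := a in let: (m, h, j) := b in
  (l, gmul g (gmul (rP i m) h), j).

Definition rees_inv (R : ReesData) (a : rees_car R) : rees_car R :=
  let: (l, g, i) := a in
  (l, gmul (ginv (rP i l)) (gmul (ginv g) (ginv (rP i l))), i).

Inductive sterm (A : Type) (n : nat) : Type :=
| SVar of 'I_n
| SConst of A
| SMul of sterm A n & sterm A n
| SInv of sterm A n.

Fixpoint seval (A : Type) (mul : A -> A -> A) (inv : A -> A) (n : nat)
  (x : 'I_n -> A) (t : sterm A n) : A :=
  match t with
  | SVar i => x i
  | SConst a => a
  | SMul s u => mul (seval mul inv x s) (seval mul inv x u)
  | SInv s => inv (seval mul inv x s)
  end.

Inductive gterm (A : Type) (n : nat) : Type :=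
| GVar of 'I_n
| GConst of A
| GOne
| GMul of gterm A n & gterm A n
| GInv of gterm A n.

Fixpoint geval (G : Group) (n : nat) (x : 'I_n -> G) (t : gterm G n) : G :=
  match t with
  | GVar i => x i
  | GConst a => a
  | GOne => gone G
  | GMul s u => gmul (geval x s) (geval x u)
  | GInv s => ginv (geval x s)
  end.

(** Generic algebraic geometry: an equation is a pair of terms (t1 = t2);
    a system is an arbitrary set of equations; an algebraic set (in A^n) is the
    solution set of a system; A is an equational domain if the union of two
    algebraic sets (hence every finite nonempty union) is algebraic. *)
Definition algebraic (A : Type) (term : nat -> Type)
  (eval : forall n, ('I_n -> A) -> term n -> A) (n : nat)
  (Y : ('I_n -> A) -> Prop) : Prop :=
  exists Sys : (term n * term n)%type -> Prop,
    forall x, Y x <-> (forall e, Sys e -> eval n x e.1 = eval n x e.2).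

Definition equational_domain (A : Type) (term : nat -> Type)
  (eval : forall n, ('I_n -> A) -> term n -> A) : Prop :=
  forall (n : nat) (Y1 Y2 : ('I_n -> A) -> Prop),
    algebraic eval Y1 -> algebraic eval Y2 ->
    algebraic eval (fun x => Y1 x \/ Y2 x).

Definition rees_ed (R : ReesData) : Prop :=
  @equational_domain (rees_car R) (sterm (rees_car R))
    (fun n x t => seval (@rees_mul R) (@rees_inv R) x t).

Definition group_ed (G : Group) : Prop :=
  @equational_domain G (gterm G) (fun n x t => geval x t).

From Pilot Require Import Defs.
From mathcomp Require Import all_boot.
From Stdlib Require Import Classical.
Set Implicit Arguments. Unset Strict Implicit.

(* The structural group G is isomorphic to the maximal subgroup
   H = {(1, g, 1)} of S, and H^n is the algebraic set defined by x_i = e x_i e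
   with e = (1, 1, 1).  A group equation translates into an equation of S, so
   Y1, Y2 ⊆ G^n lift to algebraic subsets of H^n ⊆ S^n, whose union is
   algebraic since S is an e.d.  Conversely, an equation of S evaluated on H^n
   has the form (l, w(x), i) = (l', w'(x), i') with l, i, l', i' independent
   of x: either all index pairs of the system agree, and the words w = w' form
   a system for Y1 ∪ Y2 in G, or some pair disagrees, and then Y1 ∪ Y2 = ∅ = Y1. *)

Section GroupFacts.
Variable G : Defs.Group.

Lemma mulgV (x : G) : gmul x (ginv x) = gone G.
Proof.
rewrite -[gmul x (ginv x)]gmul1g -{1}(gmulVg (ginv x)) -gmulA (gmulA (ginv x)).
by rewrite gmulVg gmul1g gmulVg.
Qed.

Lemma mulg1 (x : G) : gmul x (gone G) = x.
Proof. by rewrite -(gmulVg x) gmulA mulgV gmul1g. Qed.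

Lemma invg1 : ginv (gone G) = gone G.
Proof. by rewrite -[ginv _]mulg1 gmulVg. Qed.

End GroupFacts.

Lemma algebraic_ext (A : Type) (term : nat -> Type)
    (eval : forall n, ('I_n -> A) -> term n -> A) (n : nat)
    (Y Y' : ('I_n -> A) -> Prop) :
  (forall x, Y x <-> Y' x) -> algebraic eval Y -> algebraic eval Y'.
Proof. by move=> YY' [Sys HSys]; exists Sys => x; rewrite -YY'. Qed.

Lemma eq_seval (A : Type) (mul : A -> A -> A) (inv : A -> A) n
    (x y : 'I_n -> A) (t : sterm A n) :
  x =1 y -> seval mul inv x t = seval mul inv y t.
Proof. by move=> xy; elim: t => //= [s -> u ->|s ->]. Qed.

Section Rees.
Variable R : ReesData.
Notation S := (rees_car R).
Notation G := (rG R).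
Notation seval_S := (seval (@rees_mul R) (@rees_inv R)).

Definition rees_emb (g : G) : S := (rLam1 R, g, rI1 R).

Definition rees_e : S := rees_emb (gone G).

Lemma rees_emb_mul (g h : G) :
  rees_mul (rees_emb g) (rees_emb h) = rees_emb (gmul g h).
Proof. by rewrite /= rP1l gmul1g. Qed.

Lemma rees_emb_inv (g : G) : rees_inv (rees_emb g) = rees_emb (ginv g).
Proof. by rewrite /= rP1l invg1 mulg1 gmul1g. Qed.

Lemma rees_sandwichE (a : S) :
  a = rees_mul (rees_mul rees_e a) rees_e <-> a = rees_emb a.1.2.
Proof. by case: a => [[l g] i] /=; rewrite rP1l rPi1 !gmul1g !mulg1. Qed.

Fixpoint lift_term n (t : gterm G n) : sterm S n :=
  match t with
  | GVar i => SVar S i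
  | GConst a => SConst n (rees_emb a)
  | GOne => SConst n rees_e
  | GMul s u => SMul (lift_term s) (lift_term u)
  | GInv s => SInv (lift_term s)
  end.

Lemma seval_lift_term n (x : 'I_n -> G) (t : gterm G n) :
  seval_S (fun i => rees_emb (x i)) (lift_term t) = rees_emb (geval x t).
Proof.
elim: t => [i|a||s IHs u IHu|s IHs] //=; first by rewrite IHs IHu rees_emb_mul.
by rewrite IHs rees_emb_inv.
Qed.

(* [restrict_term t] is [(l, w, i)] such that [t] evaluates to [(l, w(x), i)]
   at every point [x] of H^n. *)
Fixpoint restrict_term n (t : sterm S n) : rLam R * gterm G n * rI R :=
  match t with
  | SVar i => (rLam1 R, GVar G i, rI1 R)
  | SConst a => (a.1.1, GConst n a.1.2, a.2)
  | SMul s u =>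
      let: (ls, ws, is_) := restrict_term s in
      let: (lu, wu, iu) := restrict_term u in
      (ls, GMul ws (GMul (GConst n (rP is_ lu)) wu), iu)
  | SInv s =>
      let: (ls, ws, is_) := restrict_term s in
      let p := GConst n (ginv (rP is_ ls)) in
      (ls, GMul p (GMul (GInv ws) p), is_)
  end.

Definition term_indices n (t : sterm S n) : rLam R * rI R :=
  ((restrict_term t).1.1, (restrict_term t).2).

Definition term_word n (t : sterm S n) : gterm G n := (restrict_term t).1.2.

Lemma seval_restrict_term n (x : 'I_n -> G) (t : sterm S n) :
  seval_S (fun i => rees_emb (x i)) t =
  ((term_indices t).1, geval x (term_word t), (term_indices t).2).
Proof.
rewrite /term_indices /term_word.
elim: t => [i|[[l g] i]|s IHs u IHu|s IHs] //=.
- rewrite IHs IHu; case: (restrict_term s) => [[? ?] ?].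
  by case: (restrict_term u) => [[? ?] ?].
- by rewrite IHs; case: (restrict_term s) => [[? ?] ?].
Qed.

Lemma seval_restrict_eq n (x : 'I_n -> G) (t u : sterm S n) :
  seval_S (fun i => rees_emb (x i)) t = seval_S (fun i => rees_emb (x i)) u <->
  term_indices t = term_indices u /\ geval x (term_word t) = geval x (term_word u).
Proof.
rewrite !seval_restrict_term.
case: (term_indices t) (term_indices u) => [l i] [l' i'] /=.
by split=> [[-> -> ->] | [[-> ->] ->]].
Qed.

Definition lift_set n (Y : ('I_n -> G) -> Prop) (x : 'I_n -> S) : Prop :=
  (forall i, x i = rees_emb (x i).1.2) /\ Y (fun i => (x i).1.2).

Lemma algebraic_lift_set n (Y : ('I_n -> G) -> Prop) :
  algebraic (fun n x t => geval x t) Y ->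
  algebraic (fun n x t => seval_S x t) (lift_set Y).
Proof.
case=> Sys HSys.
pose in_H i := (SVar S i, SMul (SMul (SConst n rees_e) (SVar S i)) (SConst n rees_e)).
exists (fun e => (exists i, e = in_H i) \/
                 exists2 ge, Sys ge & e = (lift_term ge.1, lift_term ge.2)) => x.
split=> [[xH HY] e [[i ->] | [ge Sys_ge ->]] | Hx] /=.
- by apply/rees_sandwichE; rewrite -xH.
- by rewrite !(eq_seval _ _ _ xH) !seval_lift_term (proj1 (HSys _) HY ge Sys_ge).
have xH i : x i = rees_emb (x i).1.2.
  by apply/rees_sandwichE; apply: (Hx (in_H i)); left; exists i.
split=> //; apply/HSys => ge Sys_ge.
have := Hx (lift_term ge.1, lift_term ge.2) (or_intror (ex_intro2 _ _ ge Sys_ge erefl)).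
by rewrite /= !(eq_seval _ _ _ xH) !seval_lift_term => -[].
Qed.

(* The restriction of an algebraic set of S to H^n need not be algebraic in G
   (G may be trivial while the restriction is empty), hence the dichotomy. *)
Lemma algebraic_restrict n (Z : ('I_n -> S) -> Prop) :
  algebraic (fun n x t => seval_S x t) Z ->
  (forall x, ~ Z (fun i => rees_emb (x i))) \/
  algebraic (fun n x t => geval x t) (fun x => Z (fun i => rees_emb (x i))).
Proof.
case=> T HT.
have [[e [Te Ne]] | indices_agree] :=
  classic (exists e, T e /\ term_indices e.1 <> term_indices e.2).
  by left=> x /HT /(_ e Te) /seval_restrict_eq [].
right; exists (fun ge => exists2 e, T e & ge = (term_word e.1, term_word e.2)) => x.
rewrite HT; split=> [Hx _ [e Te ->] | Hx e Te].
  by have /seval_restrict_eq[] := Hx e Te.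
apply/seval_restrict_eq; split; first by apply: NNPP => Ne; apply: indices_agree; exists e.
exact: Hx (ex_intro2 _ _ e Te erefl).
Qed.

Lemma lift_set_emb n (Y : ('I_n -> G) -> Prop) (x : 'I_n -> G) :
  lift_set Y (fun i => rees_emb (x i)) <-> Y x.
Proof. by split=> [[] | ] //. Qed.

End Rees.

Theorem mainTheorem3 (R : ReesData) : rees_ed R -> group_ed (rG R).
Proof.
move=> S_ed n Y1 Y2 alg_Y1 alg_Y2.
have alg_union := S_ed n _ _ (algebraic_lift_set alg_Y1) (algebraic_lift_set alg_Y2).
have unionE x : (lift_set Y1 (fun i => @rees_emb R (x i)) \/
                 lift_set Y2 (fun i => @rees_emb R (x i))) <-> Y1 x \/ Y2 x.
  by rewrite !lift_set_emb.
case: (algebraic_restrict alg_union) => [union_empty | alg_restr].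
- apply: algebraic_ext alg_Y1 => x; split; first by left.
  by move=> /unionE /union_empty.
- exact: algebraic_ext alg_restr.
Qed.
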